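(* Let $\mathcal{T}$ be a trifocal Grassmann tensor of dimension $n_1\times n_2\times n_3$ satisfying the Genericity Assumption, with canonical form $\mathcal{T}^c$ and multilinear rank $(r_1,r_2,r_3)$. Let $V_j\in GL(n_j)$ ($j=1,2,3$) be invertible matrices with $\mathcal{T}^c=(V_1,V_2,V_3)\cdot\mathcal{T}$. For each $j$ let $k_1<\dots<k_{r_j}$ be the indices of the nonzero rows of the flattening $\mathcal{T}^c_j$, and let $U_j$ be the $n_j\times r_j$ matrix with columns $\mathbf{e}_{k_1},\dots,\mathbf{e}_{k_{r_j}}$ (standard basis vectors of $\mathbb{C}^{n_j}$). Put $\mathcal{C}^c=(U_1^*,U_2^*,U_3^* )\cdot\mathcal{T}^c$ (the tensor obtained from $\mathcal{T}^c$ by deleting all zero slices). Let $M_j=V_j^{-1}U_j$, let $E_j$ be an $r_j\times r_j$ unitary matrix whose columns are orthonormal eigenvectors of $M_j^*M_j$, and let $D_j$ be the diagonal matrix of the corresponding singular values of $M_j$ (square roots of the eigenvalues, in the same order). Set $B_j=E_jD_j^{-1}$, $S_j=M_jB_j$ and $\mathcal{C}=(B_1^{-1},B_2^{-1},B_3^{-1})\cdot\mathcal{C}^c$. Then each $S_j$ is semi-orthogonal ($S_j^*S_j=I_{r_j}$), $\mathcal{T}=(S_1,S_2,S_3)\cdot\mathcal{C}$ and $\mathcal{C}=(S_1^*,S_2^*,S_3^* )\cdot\mathcal{T}$; that is, $\mathcal{C}$ is a core of $\mathcal{T}$.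
   Context: Work over $\mathbb{C}$; $A^*$ is the conjugate transpose. Multilinear multiplication: for matrices $A_r$ of size $m_r\times n_r$ and a tensor $\mathcal{T}=[T_{i,j,k}]$ of dimension $n_1\times n_2\times n_3$, $(A_1,A_2,A_3)\cdot\mathcal{T}$ is the $m_1\times m_2\times m_3$ tensor with entries $\sum_{i',j',k'}(A_1)_{i,i'}(A_2)_{j,j'}(A_3)_{k,k'}T_{i',j',k'}$. Flattenings: $\mathcal{T}_1$ is the $n_1\times(n_2n_3)$ matrix whose row $i$ contains the entries $T_{i,j,k}$; $\mathcal{T}_2,\mathcal{T}_3$ analogously; the multilinear rank is $(\mathrm{rk}\,\mathcal{T}_1,\mathrm{rk}\,\mathcal{T}_2,\mathrm{rk}\,\mathcal{T}_3)$. A core of $\mathcal{T}$ with multilinear rank $(r_1,r_2,r_3)$ is a tensor $\mathcal{C}$ of dimension $r_1\times r_2\times r_3$ for which there exist $n_j\times r_j$ matrices $S_j$ with $S_j^*S_j=I_{r_j}$, $(S_1^*,S_2^*,S_3^* )\cdot\mathcal{T}=\mathcal{C}$ and $(S_1,S_2,S_3)\cdot\mathcal{C}=\mathcal{T}$. Trifocal Grassmann tensor: let $P_j$ ($j=1,2,3$) be maximal-rank $(h_j+1)\times(k+1)$ matrices, $h_j\ge2$, with profile $(\alpha_1,\alpha_2,\alpha_3)$ ($1\le\alpha_j\le h_j$, $\sum\alpha_j=k+1$), $s_j=h_j-\alpha_j$. Entries $\mathcal{T}_{I,J,K}$ (multi-indices $I,J,K$ of sizes $s_j+1$, lexicographically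 ordered) are the determinants of the square submatrices of $[P_1^T|P_2^T|P_3^T]$ formed by the columns of block 1 not in $I$, block 2 not in $J$, block 3 not in $K$. Genericity Assumption: with $L_j$ the column space of $P_j^T$, $L_t+(L_r\cap L_s)=\mathbb{C}^{k+1}$ for all $\{r,s,t\}=\{1,2,3\}$. With $i=h_1+h_2+h_3+1-2k$, $j_{r,s}=k-h_t$, there are $H_j\in GL(h_j+1)$, $K\in GL(k+1)$ with $[(H_1P_1K)^T|(H_2P_2K)^T|(H_3P_3K)^T]=\Phi$, where (row blocks of sizes $i,j_{1,2},j_{1,3},j_{2,3}$) $$\Phi=\left[\begin{array}{ccc|ccc|ccc} I_i&0&0&I_i&0&0&I_i&0&0\\ 0&I_{j_{1,2}}&0&0&I_{j_{1,2}}&0&0&0&0\\ 0&0&I_{j_{1,3}}&0&0&0&0&I_{j_{1,3}}&0\\ 0&0&0&0&0&I_{j_{2,3}}&0&0&I_{j_{2,3}}\end{array}\right],$$ and the canonical form $\mathcal{T}^c$ is the Grassmann tensor of the same profile computed from $\Phi$. In the canonical form, every column of each flattening $\mathcal{T}^c_j$ is either zero or a standard basis vector up to sign (at most one nonzero entry per column, equal to $\pm1$), and the multilinear ranks of $\mathcal{T}$ and $\mathcal{T}^c$ agree. *)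

(* Complex numbers: an arbitrary numClosedFieldType C
   (algebraically closed field with conjugation and order on reals;
   the complex numbers are an instance). *)
From HB Require Import structures.
From mathcomp Require Import all_boot all_order all_algebra.
Set Implicit Arguments. Unset Strict Implicit. Unset Printing Implicit Defensive.
Import Order.TTheory GRing.Theory Num.Theory.
Local Open Scope ring_scope.

(* all increasing lists of length m drawn from l (in lexicographic order
   when l is increasing) *)
Fixpoint combs (l : seq nat) (m : nat) {struct l} : seq (seq nat) :=
  match m, l with
  | 0%N, _ => [:: [::]]
  | _.+1, [::] => [::]
  | m'.+1, x :: l' => map (cons x) (combs l' m') ++ combs l' m
  end.

(* multi-indices of size s+1 = h - a + 1 in {0..h}, lexicographically ordered,
   where a is the profile entry alpha and s = h - alpha *)
Definition midx (h a : nat) : seq (seq nat) := combs (iota 0 h.+1) (h - a).+1.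
Definition mdim (h a : nat) : nat := size (midx h a).

Definition mcomp (h a : nat) (I : 'I_(mdim h a)) : seq nat :=
  [seq x <- iota 0 h.+1 | x \notin nth [::] (midx h a) I].

Section Defs.
Variable C : numClosedFieldType.

Definition ctrmx m n (A : 'M[C]_(m, n)) : 'M[C]_(n, m) := (map_mx Num.conj A)^T.

Definition tensor (n1 n2 n3 : nat) := 'I_n1 -> 'I_n2 -> 'I_n3 -> C.

Definition mlmul m1 m2 m3 n1 n2 n3 (A1 : 'M[C]_(m1, n1)) (A2 : 'M[C]_(m2, n2))
  (A3 : 'M[C]_(m3, n3)) (T : tensor n1 n2 n3) : tensor m1 m2 m3 :=
  fun i j l => \sum_(i' < n1) \sum_(j' < n2) \sum_(l' < n3)
                 A1 i i' * A2 j j' * A3 l l' * T i' j' l'.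

(* flattenings (column order is immaterial for ranks and zero rows) *)
Definition flat1 n1 n2 n3 (T : tensor n1 n2 n3) : 'M[C]_(n1, n2 * n3) :=
  \matrix_(i < n1) mxvec (\matrix_(j < n2, l < n3) T i j l).
Definition flat2 n1 n2 n3 (T : tensor n1 n2 n3) : 'M[C]_(n2, n1 * n3) :=
  \matrix_(j < n2) mxvec (\matrix_(i < n1, l < n3) T i j l).
Definition flat3 n1 n2 n3 (T : tensor n1 n2 n3) : 'M[C]_(n3, n1 * n2) :=
  \matrix_(l < n3) mxvec (\matrix_(i < n1, j < n2) T i j l).

(* Trifocal Grassmann tensor of profile (a1,a2,a3): entry (I,J,K) is the
   determinant of the square submatrix of [P1^T | P2^T | P3^T] formed by the
   columns of block 1 not in I, of block 2 not in J, of block 3 not in K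
   (in this order, increasing within each block). Column x of block b is the
   transpose of row x of P_b. *)
Definition grassmann (k h1 h2 h3 a1 a2 a3 : nat) (P1 : 'M[C]_(h1.+1, k.+1))
  (P2 : 'M[C]_(h2.+1, k.+1)) (P3 : 'M[C]_(h3.+1, k.+1)) :
  tensor (mdim h1 a1) (mdim h2 a2) (mdim h3 a3) :=
  fun I J K =>
    let sel := [seq (0%N, x) | x <- mcomp I] ++ [seq (1%N, x) | x <- mcomp J]
               ++ [seq (2%N, x) | x <- mcomp K] in
    \det (\matrix_(r < k.+1, c < k.+1)
            let bx := nth (0%N, 0%N) sel c in
            if bx.1 == 0%N then P1 (inord bx.2) r
            else if bx.1 == 1%N then P2 (inord bx.2) r
            else P3 (inord bx.2) r).

(* Genericity Assumption: L_t + (L_r :&: L_s) = C^{k+1}, L_j = column space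
   of P_j^T = row space of P_j *)
Definition genericity k h1 h2 h3 (P1 : 'M[C]_(h1.+1, k.+1))
  (P2 : 'M[C]_(h2.+1, k.+1)) (P3 : 'M[C]_(h3.+1, k.+1)) : Prop :=
  [/\ row_full (P3 + (P1 :&: P2))%MS, row_full (P2 + (P1 :&: P3))%MS
    & row_full (P1 + (P2 :&: P3))%MS].

(* The canonical cameras: (Pc_j)^T is the j-th column block of Phi, with row
   blocks of sizes i, j12, j13, j23. *)
Definition phi_i h1 h2 h3 k := (h1 + h2 + h3 + 1 - 2 * k)%N.
Definition canP1 k h1 : 'M[C]_(h1.+1, k.+1) :=
  \matrix_(c < h1.+1, r < k.+1) ((r : nat) == c)%:R.
Definition canP2 k h1 h2 h3 : 'M[C]_(h2.+1, k.+1) :=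
  \matrix_(c < h2.+1, r < k.+1)
    (if (c < phi_i h1 h2 h3 k + (k - h3))%N then (r : nat) == c
     else (r : nat) == (c + (k - h2))%N)%:R.
Definition canP3 k h1 h2 h3 : 'M[C]_(h3.+1, k.+1) :=
  \matrix_(c < h3.+1, r < k.+1)
    (if (c < phi_i h1 h2 h3 k)%N then (r : nat) == c
     else (r : nat) == (c + (k - h3))%N)%:R.

Arguments grassmann {k h1 h2 h3} a1 a2 a3 P1 P2 P3 _ _ _.
Definition canonical_form k h1 h2 h3 a1 a2 a3 :
  tensor (mdim h1 a1) (mdim h2 a2) (mdim h3 a3) :=
  grassmann a1 a2 a3 (canP1 k h1) (canP2 k h1 h2 h3) (canP3 k h1 h2 h3).

Definition selmx n r (kk : 'I_r -> 'I_n) : 'M[C]_(n, r) :=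
  \matrix_(i < n, a < r) (i == kk a)%:R.

End Defs.
Arguments grassmann {C k h1 h2 h3} a1 a2 a3 P1 P2 P3 _ _ _.
Arguments canonical_form : clear implicits.
Arguments selmx C {n r} kk.
Arguments ctrmx {C m n} A.

(* The canonical form has zero slices outside the selected indices, so the
   projections U_j U_j^* act trivially on it and T = (M_1,M_2,M_3).C^c with
   M_j = V_j^-1 U_j.  The columns of M_j are independent, hence every singular
   value d_j is nonzero, B_j = E_j D_j^-1 is invertible and S_j = M_j B_j
   satisfies S_j^* S_j = D_j^-1 E_j^* (M_j^* M_j E_j) D_j^-1 = I.  Then
   T = (S_1,S_2,S_3).C, and multiplying by the S_j^* recovers C.
   Only T^c = (V_1,V_2,V_3).T and the zero slices of T^c are used. *)

From HB Require Import structures.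
From mathcomp Require Import all_boot all_order all_algebra.
From Stdlib Require Import FunctionalExtensionality.
Import Order.TTheory GRing.Theory Num.Theory.
Local Open Scope ring_scope.
Set Implicit Arguments. Unset Strict Implicit.

Section ModeProducts.
Variable C : numClosedFieldType.

Lemma tensorP n1 n2 n3 (T T' : tensor C n1 n2 n3) :
  (forall i j l, T i j l = T' i j l) -> T = T'.
Proof.
move=> eqT; do 3!apply: functional_extensionality => ?; exact: eqT.
Qed.

Definition mode1 m n1 n2 n3 (A : 'M[C]_(m, n1)) (T : tensor C n1 n2 n3) :
  tensor C m n2 n3 := fun i j l => \sum_(i' < n1) A i i' * T i' j l.
Definition mode2 m n1 n2 n3 (A : 'M[C]_(m, n2)) (T : tensor C n1 n2 n3) :
  tensor C n1 m n3 := fun i j l => \sum_(j' < n2) A j j' * T i j' l.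
Definition mode3 m n1 n2 n3 (A : 'M[C]_(m, n3)) (T : tensor C n1 n2 n3) :
  tensor C n1 n2 m := fun i j l => \sum_(l' < n3) A l l' * T i j l'.

Lemma mlmul_modes m1 m2 m3 n1 n2 n3 (A1 : 'M[C]_(m1, n1))
  (A2 : 'M[C]_(m2, n2)) (A3 : 'M[C]_(m3, n3)) (T : tensor C n1 n2 n3) :
  mlmul A1 A2 A3 T = mode1 A1 (mode2 A2 (mode3 A3 T)).
Proof.
apply: tensorP => i j l; apply: eq_bigr => i' _.
rewrite mulr_sumr; apply: eq_bigr => j' _.
by rewrite !mulr_sumr; apply: eq_bigr => l' _; rewrite !mulrA.
Qed.

Lemma mode1M p m n1 n2 n3 (A : 'M[C]_(p, m)) (B : 'M[C]_(m, n1))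
  (T : tensor C n1 n2 n3) : mode1 A (mode1 B T) = mode1 (A *m B) T.
Proof.
apply: tensorP => i j l; rewrite /mode1.
under eq_bigr do rewrite mulr_sumr.
rewrite exchange_big; apply: eq_bigr => i' _.
by rewrite mxE mulr_suml; apply: eq_bigr => x _; rewrite mulrA.
Qed.

Lemma mode2M p m n1 n2 n3 (A : 'M[C]_(p, m)) (B : 'M[C]_(m, n2))
  (T : tensor C n1 n2 n3) : mode2 A (mode2 B T) = mode2 (A *m B) T.
Proof.
apply: tensorP => i j l; rewrite /mode2.
under eq_bigr do rewrite mulr_sumr.
rewrite exchange_big; apply: eq_bigr => j' _.
by rewrite mxE mulr_suml; apply: eq_bigr => x _; rewrite mulrA.
Qed.

Lemma mode3M p m n1 n2 n3 (A : 'M[C]_(p, m)) (B : 'M[C]_(m, n3))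
  (T : tensor C n1 n2 n3) : mode3 A (mode3 B T) = mode3 (A *m B) T.
Proof.
apply: tensorP => i j l; rewrite /mode3.
under eq_bigr do rewrite mulr_sumr.
rewrite exchange_big; apply: eq_bigr => l' _.
by rewrite mxE mulr_suml; apply: eq_bigr => x _; rewrite mulrA.
Qed.

Lemma mode12C p q n1 n2 n3 (A : 'M[C]_(p, n1)) (B : 'M[C]_(q, n2))
  (T : tensor C n1 n2 n3) : mode1 A (mode2 B T) = mode2 B (mode1 A T).
Proof.
apply: tensorP => i j l; rewrite /mode1 /mode2.
under eq_bigr do rewrite mulr_sumr.
rewrite exchange_big; apply: eq_bigr => j' _.
by rewrite mulr_sumr; apply: eq_bigr => x _; rewrite !mulrA [A _ _ * _]mulrC.
Qed.

Lemma mode13C p q n1 n2 n3 (A : 'M[C]_(p, n1)) (B : 'M[C]_(q, n3))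
  (T : tensor C n1 n2 n3) : mode1 A (mode3 B T) = mode3 B (mode1 A T).
Proof.
apply: tensorP => i j l; rewrite /mode1 /mode3.
under eq_bigr do rewrite mulr_sumr.
rewrite exchange_big; apply: eq_bigr => l' _.
by rewrite mulr_sumr; apply: eq_bigr => x _; rewrite !mulrA [A _ _ * _]mulrC.
Qed.

Lemma mode23C p q n1 n2 n3 (A : 'M[C]_(p, n2)) (B : 'M[C]_(q, n3))
  (T : tensor C n1 n2 n3) : mode2 A (mode3 B T) = mode3 B (mode2 A T).
Proof.
apply: tensorP => i j l; rewrite /mode2 /mode3.
under eq_bigr do rewrite mulr_sumr.
rewrite exchange_big; apply: eq_bigr => l' _.
by rewrite mulr_sumr; apply: eq_bigr => x _; rewrite !mulrA [A _ _ * _]mulrC.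
Qed.

Lemma mlmulM p1 p2 p3 q1 q2 q3 n1 n2 n3 (A1 : 'M[C]_(p1, q1))
  (A2 : 'M[C]_(p2, q2)) (A3 : 'M[C]_(p3, q3)) (B1 : 'M[C]_(q1, n1))
  (B2 : 'M[C]_(q2, n2)) (B3 : 'M[C]_(q3, n3)) (T : tensor C n1 n2 n3) :
  mlmul A1 A2 A3 (mlmul B1 B2 B3 T) = mlmul (A1 *m B1) (A2 *m B2) (A3 *m B3) T.
Proof.
rewrite !mlmul_modes -mode1M -mode2M -mode3M -mode13C -mode12C.
by rewrite -[mode3 A3 _]mode23C.
Qed.

Lemma sum_delta_mul n (f : 'I_n -> C) i : \sum_i' (i == i')%:R * f i' = f i.
Proof.
rewrite (bigD1 i) //= eqxx mul1r big1 ?addr0 // => x /negPf nx.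
by rewrite eq_sym nx mul0r.
Qed.

Lemma mlmul1 n1 n2 n3 (T : tensor C n1 n2 n3) : mlmul 1%:M 1%:M 1%:M T = T.
Proof.
apply: tensorP => i j l; rewrite -(sum_delta_mul (fun i' => T i' j l) i).
apply: eq_bigr => i' _; rewrite mxE -(sum_delta_mul (fun j' => T i' j' l) j).
rewrite mulr_sumr; apply: eq_bigr => j' _.
rewrite mxE -(sum_delta_mul (fun l' => T i' j' l') l) !mulr_sumr.
by apply: eq_bigr => l' _; rewrite !mxE !mulrA.
Qed.

End ModeProducts.

Section ConjugateTranspose.
Variable C : numClosedFieldType.

Lemma ctrmxM m n p (A : 'M[C]_(m, n)) (B : 'M[C]_(n, p)) :
  ctrmx (A *m B) = ctrmx B *m ctrmx A.
Proof. by rewrite /ctrmx map_mxM trmx_mul. Qed.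

Lemma ctrmx_diag_ge0 n (d : 'rV[C]_n) :
  (forall a, 0 <= d 0 a) -> ctrmx (diag_mx d) = diag_mx d.
Proof.
move=> d_ge0; rewrite /ctrmx map_diag_mx tr_diag_mx; congr diag_mx.
by apply/matrixP => i a; rewrite (ord1 i) !mxE; apply: geC0_conj.
Qed.

Lemma ctrmx_mul_self_eq0 n (y : 'cV[C]_n) : ctrmx y *m y = 0 -> y = 0.
Proof.
move=> /matrixP /(_ 0 0); rewrite !mxE => normy0.
have sqr_ge0 i : true -> 0 <= ctrmx y 0 i * y i 0.
  by rewrite !mxE -normCKC exprn_ge0.
apply/matrixP => i j; rewrite (ord1 j) mxE.
have := psumr_eq0P sqr_ge0 normy0 (i := i) isT.
by rewrite !mxE -normCKC => /eqP; rewrite expf_eq0 normr_eq0 => /eqP.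
Qed.

End ConjugateTranspose.

Lemma incr_ord_inj r n (f : 'I_r -> 'I_n) :
  (forall x y : 'I_r, (x < y)%N -> (f x < f y)%N) -> injective f.
Proof. by move=> f_incr; apply: inc_inj; apply: le_mono. Qed.

Section SelectionMatrices.
Variables (C : numClosedFieldType) (n r : nat) (kk : 'I_r -> 'I_n).
Hypothesis kk_inj : injective kk.

Lemma ctrmx_selmx : ctrmx (selmx C kk) = (selmx C kk)^T.
Proof. by apply/matrixP => i j; rewrite !mxE conjC_nat. Qed.

Lemma selmx_mulmx_eq0 p (x : 'M[C]_(r, p)) : selmx C kk *m x = 0 -> x = 0.
Proof.
move=> /matrixP Ux0; apply/matrixP => a j; have := Ux0 (kk a) j.
rewrite !mxE (bigD1 a) //= mxE eqxx mul1r big1 ?addr0 // => b ba.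
by rewrite mxE (inj_eq kk_inj) eq_sym (negPf ba) mul0r.
Qed.

Lemma invmx_mul_selmx_eq0 (V : 'M[C]_n) p (x : 'M[C]_(r, p)) :
  V \in unitmx -> invmx V *m selmx C kk *m x = 0 -> x = 0.
Proof.
move=> V_unit VUx0; apply: selmx_mulmx_eq0.
by rewrite -(mulKVmx V_unit (selmx C kk *m x)) (mulmxA (invmx V)) VUx0 mulmx0.
Qed.

Lemma selmx_proj_entry i i' :
  (selmx C kk *m ctrmx (selmx C kk)) i i' =
  ((i == i') && [exists a, kk a == i])%:R.
Proof.
rewrite ctrmx_selmx mxE; case: existsP => [[a /eqP kai] | no_a].
  rewrite andbT (bigD1 a) //= !mxE kai eqxx mul1r eq_sym big1 ?addr0 // => b ba.
  by rewrite !mxE -kai (inj_eq kk_inj) eq_sym (negPf ba) mul0r.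
rewrite andbF big1 // => a _; rewrite !mxE.
by case: eqP => [kai | _]; [case: no_a; exists a; rewrite kai | rewrite mul0r].
Qed.

Lemma selmx_proj_sum (f : 'I_n -> C) i :
  (f i != 0 -> [exists a, kk a == i]) ->
  \sum_i' (selmx C kk *m ctrmx (selmx C kk)) i i' * f i' = f i.
Proof.
move=> supp_f; under eq_bigr do rewrite selmx_proj_entry.
case: (boolP [exists a, kk a == i]) => [im_i | not_im_i].
  by under eq_bigr do rewrite andbT; rewrite sum_delta_mul.
rewrite big1 => [|i' _]; last by rewrite andbF mul0r.
by apply/esym/eqP; apply: contraNT not_im_i.
Qed.

End SelectionMatrices.

Section ZeroSlices.
Variables (C : numClosedFieldType) (n1 n2 n3 : nat) (T : tensor C n1 n2 n3).

Lemma flat1_row_neq0 i j l : T i j l != 0 -> row i (flat1 T) != 0.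
Proof.
apply: contraNneq; rewrite rowK => /eqP; rewrite mxvec_eq0.
by move=> /eqP /matrixP /(_ j l); rewrite !mxE => ->.
Qed.

Lemma flat2_row_neq0 i j l : T i j l != 0 -> row j (flat2 T) != 0.
Proof.
apply: contraNneq; rewrite rowK => /eqP; rewrite mxvec_eq0.
by move=> /eqP /matrixP /(_ i l); rewrite !mxE => ->.
Qed.

Lemma flat3_row_neq0 i j l : T i j l != 0 -> row l (flat3 T) != 0.
Proof.
apply: contraNneq; rewrite rowK => /eqP; rewrite mxvec_eq0.
by move=> /eqP /matrixP /(_ i j); rewrite !mxE => ->.
Qed.

Section Projection.
Variables (r1 r2 r3 : nat) (kk1 : 'I_r1 -> 'I_n1) (kk2 : 'I_r2 -> 'I_n2).
Variable kk3 : 'I_r3 -> 'I_n3.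
Hypotheses (kk1_inj : injective kk1) (kk2_inj : injective kk2).
Hypothesis kk3_inj : injective kk3.
Hypothesis supp1 : forall i, row i (flat1 T) != 0 -> [exists a, kk1 a == i].
Hypothesis supp2 : forall j, row j (flat2 T) != 0 -> [exists a, kk2 a == j].
Hypothesis supp3 : forall l, row l (flat3 T) != 0 -> [exists a, kk3 a == l].

Lemma mode1_selmx_proj : mode1 (selmx C kk1 *m ctrmx (selmx C kk1)) T = T.
Proof.
apply: tensorP => i j l; apply: (selmx_proj_sum kk1_inj (f := T^~ j ^~ l)).
by move=> /flat1_row_neq0; apply: supp1.
Qed.

Lemma mode2_selmx_proj : mode2 (selmx C kk2 *m ctrmx (selmx C kk2)) T = T.
Proof.
apply: tensorP => i j l; apply: (selmx_proj_sum kk2_inj (f := (T i)^~ l)).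
by move=> /flat2_row_neq0; apply: supp2.
Qed.

Lemma mode3_selmx_proj : mode3 (selmx C kk3 *m ctrmx (selmx C kk3)) T = T.
Proof.
apply: tensorP => i j l; apply: (selmx_proj_sum kk3_inj (f := T i j)).
by move=> /flat3_row_neq0; apply: supp3.
Qed.

Lemma mlmul_selmx_proj :
  mlmul (selmx C kk1 *m ctrmx (selmx C kk1))
        (selmx C kk2 *m ctrmx (selmx C kk2))
        (selmx C kk3 *m ctrmx (selmx C kk3)) T = T.
Proof.
by rewrite mlmul_modes mode3_selmx_proj mode2_selmx_proj mode1_selmx_proj.
Qed.

End Projection.
End ZeroSlices.

Lemma invmx_diag (F : fieldType) n (d : 'rV[F]_n) :
  (forall a, d 0 a != 0) -> invmx (diag_mx d) = diag_mx (map_mx GRing.inv d).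
Proof.
move=> d_neq0; have dd' : diag_mx d *m diag_mx (map_mx GRing.inv d) = 1%:M.
  rewrite mulmx_diag -diag_const_mx; congr diag_mx.
  by apply/matrixP => i a; rewrite (ord1 i) !mxE mulfV.
have [d_unit _] := mulmx1_unit dd'.
by rewrite -[LHS]mulmx1 -dd' mulKmx.
Qed.

Section SemiOrthogonal.
Variables (C : numClosedFieldType) (n r : nat) (M : 'M[C]_(n, r)).
Variables (E : 'M[C]_r) (d : 'rV[C]_r).
Hypothesis M_inj : forall x : 'cV_r, M *m x = 0 -> x = 0.
Hypothesis E_unitary : ctrmx E *m E = 1%:M.
Hypothesis d_ge0 : forall a, 0 <= d 0 a.
Hypothesis E_eigen :
  forall a, (ctrmx M *m M) *m col a E = (d 0 a ^+ 2) *: col a E.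

Lemma gram_mul_eigenbasis :
  ctrmx M *m M *m E = E *m diag_mx (map_mx (fun x => x ^+ 2) d).
Proof.
apply/matrixP => i a.
have -> : (ctrmx M *m M *m E) i a = col a (ctrmx M *m M *m E) i 0.
  by rewrite [RHS]mxE.
by rewrite colE -mulmxA -colE E_eigen mul_mx_diag !mxE mulrC.
Qed.

Lemma singular_value_neq0 a : d 0 a != 0.
Proof.
apply/eqP => da0; have MEa0 : M *m col a E = 0.
  apply: ctrmx_mul_self_eq0.
  rewrite ctrmxM -mulmxA (mulmxA (ctrmx M)) E_eigen da0 expr0n.
  by rewrite scale0r mulmx0.
have /matrixP/(_ a a) := E_unitary; rewrite !mxE eqxx big1 => [/eqP|i _].
  by rewrite eq_sym oner_eq0.
by have /matrixP/(_ i 0) := M_inj MEa0; rewrite !mxE => ->; rewrite mulr0.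
Qed.

Lemma svd_basis_unit : E *m invmx (diag_mx d) \in unitmx.
Proof.
have [_ E_unit] := mulmx1_unit E_unitary.
rewrite unitmx_mul E_unit unitmx_inv unitmxE det_diag unitfE.
by apply/prodf_neq0 => a _; apply: singular_value_neq0.
Qed.

Lemma svd_semi_orthogonal :
  ctrmx (M *m (E *m invmx (diag_mx d))) *m (M *m (E *m invmx (diag_mx d)))
  = 1%:M.
Proof.
rewrite invmx_diag => [|a]; last exact: singular_value_neq0.
rewrite !ctrmxM ctrmx_diag_ge0 => [|a]; last by rewrite mxE invr_ge0.
rewrite -!mulmxA (mulmxA (ctrmx M)) (mulmxA (ctrmx M *m M)) gram_mul_eigenbasis.
rewrite !mulmxA -(mulmxA _ (ctrmx E)) E_unitary mulmx1 !mulmx_diag.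
rewrite -diag_const_mx; congr diag_mx; apply/matrixP => i a.
by rewrite (ord1 i) !mxE expr2 mulrA mulVf ?mul1r ?mulfV ?singular_value_neq0.
Qed.

End SemiOrthogonal.

Lemma selmx_svd_factor (C : numClosedFieldType) n r (V : 'M[C]_n)
  (kk : 'I_r -> 'I_n) (E : 'M[C]_r) (d : 'rV[C]_r) :
  let M := invmx V *m selmx C kk in let B := E *m invmx (diag_mx d) in
  V \in unitmx -> injective kk -> ctrmx E *m E = 1%:M ->
  (forall a, 0 <= d 0 a) ->
  (forall a, (ctrmx M *m M) *m col a E = (d 0 a ^+ 2) *: col a E) ->
  B \in unitmx /\ ctrmx (M *m B) *m (M *m B) = 1%:M.
Proof.
move=> M B V_unit kk_inj E_unitary d_ge0 E_eigen.
have M_inj (x : 'cV_r) : M *m x = 0 -> x = 0.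
  exact: (invmx_mul_selmx_eq0 kk_inj (x := x) V_unit).
split; first exact: svd_basis_unit M_inj E_unitary E_eigen.
exact: svd_semi_orthogonal M_inj E_unitary d_ge0 E_eigen.
Qed.

Theorem mainTheorem6 (C : numClosedFieldType) (k h1 h2 h3 a1 a2 a3 : nat)
  (P1 : 'M[C]_(h1.+1, k.+1)) (P2 : 'M[C]_(h2.+1, k.+1))
  (P3 : 'M[C]_(h3.+1, k.+1))
  (hh1 : (2 <= h1)%N) (hh2 : (2 <= h2)%N) (hh3 : (2 <= h3)%N)
  (rkP1 : \rank P1 = minn h1.+1 k.+1) (rkP2 : \rank P2 = minn h2.+1 k.+1)
  (rkP3 : \rank P3 = minn h3.+1 k.+1)
  (ha1 : (1 <= a1 <= h1)%N) (ha2 : (1 <= a2 <= h2)%N) (ha3 : (1 <= a3 <= h3)%N)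
  (hsum : (a1 + a2 + a3)%N = k.+1)
  (hgen : genericity P1 P2 P3) :
  let T := grassmann a1 a2 a3 P1 P2 P3 in
  let Tc := canonical_form C k h1 h2 h3 a1 a2 a3 in
  forall (r1 r2 r3 : nat),
  \rank (flat1 T) = r1 -> \rank (flat2 T) = r2 -> \rank (flat3 T) = r3 ->
  forall (V1 : 'M[C]_(mdim h1 a1)) (V2 : 'M[C]_(mdim h2 a2))
         (V3 : 'M[C]_(mdim h3 a3)),
  V1 \in unitmx -> V2 \in unitmx -> V3 \in unitmx ->
  (forall i j l, Tc i j l = mlmul V1 V2 V3 T i j l) ->
  forall (kk1 : 'I_r1 -> 'I_(mdim h1 a1)) (kk2 : 'I_r2 -> 'I_(mdim h2 a2))
         (kk3 : 'I_r3 -> 'I_(mdim h3 a3)),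
  (forall x y : 'I_r1, (x < y)%N -> (kk1 x < kk1 y)%N) ->
  (forall x y : 'I_r2, (x < y)%N -> (kk2 x < kk2 y)%N) ->
  (forall x y : 'I_r3, (x < y)%N -> (kk3 x < kk3 y)%N) ->
  (forall i, (row i (flat1 Tc) != 0) = [exists a, kk1 a == i]) ->
  (forall i, (row i (flat2 Tc) != 0) = [exists a, kk2 a == i]) ->
  (forall i, (row i (flat3 Tc) != 0) = [exists a, kk3 a == i]) ->
  let U1 := selmx C kk1 in let U2 := selmx C kk2 in let U3 := selmx C kk3 in
  let Ccc := mlmul (ctrmx U1) (ctrmx U2) (ctrmx U3) Tc in
  let M1 := invmx V1 *m U1 in let M2 := invmx V2 *m U2 in
  let M3 := invmx V3 *m U3 in
  forall (E1 : 'M[C]_r1) (E2 : 'M[C]_r2) (E3 : 'M[C]_r3)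
         (d1 : 'rV[C]_r1) (d2 : 'rV[C]_r2) (d3 : 'rV[C]_r3),
  ctrmx E1 *m E1 = 1%:M -> ctrmx E2 *m E2 = 1%:M -> ctrmx E3 *m E3 = 1%:M ->
  (forall a, 0 <= d1 0 a) -> (forall a, 0 <= d2 0 a) -> (forall a, 0 <= d3 0 a) ->
  (forall a, (ctrmx M1 *m M1) *m col a E1 = (d1 0 a ^+ 2) *: col a E1) ->
  (forall a, (ctrmx M2 *m M2) *m col a E2 = (d2 0 a ^+ 2) *: col a E2) ->
  (forall a, (ctrmx M3 *m M3) *m col a E3 = (d3 0 a ^+ 2) *: col a E3) ->
  let B1 := E1 *m invmx (diag_mx d1) in let B2 := E2 *m invmx (diag_mx d2) in
  let B3 := E3 *m invmx (diag_mx d3) in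
  let S1 := M1 *m B1 in let S2 := M2 *m B2 in let S3 := M3 *m B3 in
  let Cr := mlmul (invmx B1) (invmx B2) (invmx B3) Ccc in
  [/\ ctrmx S1 *m S1 = 1%:M, ctrmx S2 *m S2 = 1%:M, ctrmx S3 *m S3 = 1%:M,
      (forall i j l, T i j l = mlmul S1 S2 S3 Cr i j l)
    & (forall i j l, Cr i j l = mlmul (ctrmx S1) (ctrmx S2) (ctrmx S3) T i j l)].
Proof.
move=> T Tc r1 r2 r3 _ _ _ V1 V2 V3 V1_unit V2_unit V3_unit /tensorP eqTc
  kk1 kk2 kk3 mon1 mon2 mon3 supp1 supp2 supp3 U1 U2 U3 Ccc M1 M2 M3
  E1 E2 E3 d1 d2 d3 E1_unitary E2_unitary E3_unitary d1_ge0 d2_ge0 d3_ge0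
  eig1 eig2 eig3 B1 B2 B3 S1 S2 S3 Cr.
have kk1_inj := incr_ord_inj mon1.
have kk2_inj := incr_ord_inj mon2.
have kk3_inj := incr_ord_inj mon3.
have [B1_unit S1_orth] :=
  selmx_svd_factor V1_unit kk1_inj E1_unitary d1_ge0 eig1.
have [B2_unit S2_orth] :=
  selmx_svd_factor V2_unit kk2_inj E2_unitary d2_ge0 eig2.
have [B3_unit S3_orth] :=
  selmx_svd_factor V3_unit kk3_inj E3_unitary d3_ge0 eig3.
have Tc_proj : mlmul (U1 *m ctrmx U1) (U2 *m ctrmx U2) (U3 *m ctrmx U3) Tc = Tc.
  by apply: mlmul_selmx_proj => // x; rewrite ?supp1 ?supp2 ?supp3.
have eqT : T = mlmul S1 S2 S3 Cr.
  rewrite mlmulM !mulmxK // mlmulM -!mulmxA -mlmulM Tc_proj eqTc mlmulM.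
  by rewrite !mulVmx // mlmul1.
split=> // [i j l | i j l]; first by rewrite -eqT.
by rewrite eqT mlmulM S1_orth S2_orth S3_orth mlmul1.
Qed.
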